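(* Let $A,B$ be disjoint sets of positive integers with $|A|=m\ge1$, $|B|=n\ge1$, let $\sigma=\sigma_1\cdots\sigma_m$ be a signed permutation of $A$ and $\pi=\pi_1\cdots\pi_n$ a signed permutation of $B$, and suppose $\sigma_m\prec\pi_n$. Let $\mathfrak S^{sb}(\sigma,\pi)$ be the set of shuffles $\alpha=\alpha_1\cdots\alpha_{n+m}$ of $\sigma$ and $\pi$ with $\alpha_{n+m}=\sigma_m$. Then $$\sum_{\alpha\in\mathfrak S^{sb}(\sigma,\pi)}q^{\mathrm{fmaj}(\alpha)}=q^{\mathrm{fmaj}(\sigma)+\mathrm{fmaj}(\pi)+2n}{n+m-1\brack n}_{q^2}.$$
   Context: A signed permutation of a finite set $A$ of positive integers is a word $w_1\cdots w_m$ of nonzero integers such that $|w_1|\cdots|w_m|$ is an arrangement of all elements of $A$. A shuffle of two words with disjoint sets of letters is a word containing both as subsequences and consisting of exactly their letters. Order $\prec$ on nonzero integers: $-1\prec-2\prec-3\prec\cdots$ (all negatives, $-a\prec-b$ iff $a<b$) $\prec1\prec2\prec3\prec\cdots$. For a word $w$ of distinct nonzero integers, $\mathrm{maj}_\prec(w)=\sum_{i:w_i\succ w_{i+1}}i$, $\mathrm{neg}(w)$ is the number of negative letters, and $\mathrm{fmaj}(w)=2\mathrm{maj}_\prec(w)+\mathrm{neg}(w)$. $[m]_x=1+x+\dots+x^{m-1}$, $[m]_x!=[1]_x\cdots[m]_x$, $[0]_x!=1$, ${N\brack K}_x=\frac{[N]_x!}{[K]_x![N-K]_x!}$. *)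

From mathcomp Require Import all_boot all_order all_algebra.
Set Implicit Arguments. Unset Strict Implicit. Unset Printing Implicit Defensive.
Import Order.TTheory GRing.Theory Num.Theory.
Local Open Scope ring_scope.

(* The order "prec" on nonzero integers:
   -1 < -2 < -3 < ... < 1 < 2 < 3 < ... *)
Definition prec (a b : int) : bool :=
  if a < 0 then (if b < 0 then b < a else true)
  else (if b < 0 then false else a < b).

(* maj_prec w = sum of the (1-based) positions i with w_i succ w_{i+1} *)
Definition maj_prec (w : seq int) : nat :=
  (\sum_(i < (size w).-1 | prec (nth (0:int) w i.+1) (nth (0:int) w i)) i.+1)%N.

Definition neg (w : seq int) : nat := count (fun x : int => x < 0) w.

Definition fmaj (w : seq int) : nat := (2 * maj_prec w + neg w)%N.

(* w is a signed permutation of the finite set A (given as a duplicate-free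
   list of positive integers) *)
Definition signed_perm (A : seq nat) (w : seq int) : Prop :=
  all (fun x : int => x != 0) w /\ perm_eq (map absz w) A.

Definition is_shuffle (s p a : seq int) : bool :=
  [&& subseq s a, subseq p a & perm_eq a (s ++ p)].

Definition qint (k : nat) (x : {poly rat}) : {poly rat} := \sum_(i < k) x ^+ i.
Definition qfact (k : nat) (x : {poly rat}) : {poly rat} :=
  \prod_(1 <= i < k.+1) qint i x.
Definition qbinom (N K : nat) (x : {poly rat}) : {poly rat} :=
  qfact N x %/ (qfact K x * qfact (N - K) x).

From mathcomp Require Import all_boot all_order all_algebra.
From mathcomp Require Import zify ring.
Import Order.TTheory GRing.Theory Num.Theory.
Local Open Scope ring_scope.

(* Read all words backwards.  A shuffle of sigma and pi ending with sigma_m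
   becomes a shuffle of rev sigma = x :: u and rev pi = y :: v beginning with x,
   and a descent of the original word counts with its distance to the end.
   Removing the first letter x of such a shuffle leaves a shuffle of u and
   y :: v starting either with the head x' of u or with y, which gives a
   recursion in which the two words swap roles.  Hence one proves, for both
   relative orders of x and y at once, that the weighted sum is
   t^(maj sigma + maj pi + [prec x y] n) [m + n - 1 choose n]_t with t = q^2: the
   Gaussian binomials obey the same recursion by the two q-Pascal rules.  The
   negative letters contribute the constant factor q^(neg sigma + neg pi). *)

Section GaussianBinomial.

Variable t : {poly rat}.

Fixpoint gauss_binom (N K : nat) : {poly rat} :=
  match N, K with
  | _, 0%N => 1
  | 0%N, _.+1 => 0
  | N'.+1, K'.+1 => gauss_binom N' K' + t ^+ K'.+1 * gauss_binom N' K'.+1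
  end.

Lemma gauss_binomS N K :
  gauss_binom N.+1 K.+1 = gauss_binom N K + t ^+ K.+1 * gauss_binom N K.+1.
Proof. by []. Qed.

#[global] Arguments gauss_binom : simpl never.

Lemma gauss_binom_small N K : (N < K)%N -> gauss_binom N K = 0.
Proof.
elim: N K => [|N IHN] [|K] // ltNK.
by rewrite gauss_binomS !IHN ?mulr0 ?addr0 //; lia.
Qed.

Lemma gauss_binom_diag N : gauss_binom N N = 1.
Proof.
by elim: N => // N IHN; rewrite gauss_binomS IHN gauss_binom_small // mulr0 addr0.
Qed.

Lemma qfactS k : qfact k.+1 t = qfact k t * qint k.+1 t.
Proof. by rewrite /qfact big_nat_recr. Qed.

Lemma qfact0 : qfact 0 t = 1.
Proof. by rewrite /qfact big_geq. Qed.

Lemma qintD a b : qint (a + b) t = qint a t + t ^+ a * qint b t.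
Proof.
rewrite /qint big_split_ord /= mulr_sumr; congr (_ + _).
by apply: eq_bigr => i _; rewrite exprD.
Qed.

Lemma gauss_binom_qfact N K : (K <= N)%N ->
  gauss_binom N K * (qfact K t * qfact (N - K) t) = qfact N t.
Proof.
elim: N K => [|N IHN] [|K] // leKN; rewrite ?qfact0 ?mul1r ?subn0 //.
have [ltKN | eqKN] : (K < N)%N \/ K = N by lia.
  have NK : (N - K = (N - K.+1).+1)%N by lia.
  have IH1 := IHN K (ltnW ltKN); have IH2 := IHN K.+1 ltKN.
  rewrite NK qfactS in IH1; rewrite qfactS in IH2.
  have qintN : qint N.+1 t = qint K.+1 t + t ^+ K.+1 * qint (N - K) t.
    by rewrite -qintD; congr qint; lia.
  rewrite gauss_binomS subSS NK !qfactS -NK qintN NK mulrDr -{1}IH1 -IH2; ring.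
rewrite eqKN gauss_binomS gauss_binom_diag gauss_binom_small // mulr0 addr0.
by rewrite subnn qfact0 !mul1r mulr1.
Qed.

(* Makes the q-factorials nonzero, so that the divisions in [qbinom] are exact. *)
Hypothesis t_at1 : t.[1] = 1.

Lemma qint_neq0 k : (0 < k)%N -> qint k t != 0.
Proof.
move=> k_gt0; apply/negP => /eqP qk0.
have : (qint k t).[1] = k%:R.
  rewrite /qint horner_sum.
  under eq_bigr => i _ do rewrite horner_exp t_at1 expr1n.
  by rewrite sumr_const card_ord.
by rewrite qk0 horner0 => /esym/eqP; rewrite pnatr_eq0; lia.
Qed.

Lemma qfact_neq0 k : qfact k t != 0.
Proof.
elim: k => [|k IHk]; first by rewrite qfact0 oner_neq0.
by rewrite qfactS mulf_neq0 // qint_neq0.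
Qed.

Lemma qbinom_gauss N K : (K <= N)%N -> qbinom N K t = gauss_binom N K.
Proof.
move=> leKN; rewrite /qbinom -(@gauss_binom_qfact N K leKN) mulpK //.
by rewrite mulf_neq0 ?qfact_neq0.
Qed.

Lemma gauss_binom_sym N K : (K <= N)%N -> gauss_binom N (N - K) = gauss_binom N K.
Proof.
move=> leKN; rewrite -!qbinom_gauss ?leq_subr // /qbinom subKn //.
by rewrite [qfact K t * _]mulrC.
Qed.

Lemma gauss_binom_symS a b : gauss_binom (a + b).+1 b.+1 = gauss_binom (a + b).+1 a.
Proof. by rewrite -gauss_binom_sym; [congr gauss_binom; lia | lia]. Qed.

Lemma gauss_binomS_rev a b : gauss_binom (a + b).+2 b.+1 =
  gauss_binom (a + b).+1 b.+1 + t ^+ a.+1 * gauss_binom (a + b).+1 b.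
Proof.
rewrite -addSn gauss_binom_symS gauss_binomS -(gauss_binom_symS a b).
by rewrite !addSn addnC gauss_binom_symS addnC.
Qed.

(* p, q, r stand for prec x x', prec x' y and prec x y with x, x', y distinct; the
   hypotheses exclude the two cyclic orders. *)
Lemma gauss_binom_pascal_step {p q r : bool} a b :
  (p && q ==> r) -> (r ==> p || q) ->
  t ^+ (p * (a + b).+2 + q * b.+1) * gauss_binom (a + b).+1 b.+1
  + t ^+ (r * (a + b).+2 + ~~ q * a.+1) * gauss_binom (a + b).+1 b
  = t ^+ (p * a.+1 + r * b.+1) * gauss_binom (a + b).+2 b.+1.
Proof.
have pascal := gauss_binomS (a + b).+1 b.
case: p q r => [] [] [] // _ _; rewrite ?mul1n ?mul0n ?addn0 ?add0n;
  first [rewrite pascal; rewrite ?(exprD, exprS, expr0); ring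
        | rewrite gauss_binomS_rev; rewrite ?(exprD, exprS, expr0); ring].
Qed.

End GaussianBinomial.

Section Shuffles.

Context {T : eqType}.
Implicit Types u v w : seq T.

(* The inner fixpoint recurses on v with x :: u fixed, making both recursions
   structural. *)
Fixpoint shuffles u v : seq (seq T) :=
  match u with
  | [::] => [:: v]
  | x :: u' =>
    let fix shuffles_u v :=
      match v with
      | [::] => [:: u]
      | y :: v' => map (cons x) (shuffles u' v) ++ map (cons y) (shuffles_u v')
      end in shuffles_u v
  end.

Lemma shuffless0 u : shuffles u [::] = [:: u].
Proof. by case: u. Qed.

Lemma shuffles_cons x u y v : shuffles (x :: u) (y :: v) =
  map (cons x) (shuffles u (y :: v)) ++ map (cons y) (shuffles (x :: u) v).
Proof. by []. Qed.

Lemma perm_shuffles u v : perm_eq (shuffles u v) (shuffles v u).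
Proof.
elim: u v => [|x u IHu] v; first by rewrite shuffless0.
elim: v => [|y v IHv]; first by rewrite shuffless0.
by rewrite !shuffles_cons perm_catC; apply: perm_cat; apply: perm_map.
Qed.

Lemma shuffles_perm {u v w} : w \in shuffles u v -> perm_eq w (u ++ v).
Proof.
elim: u v w => [|x u IHu] v w; first by rewrite inE => /eqP ->.
elim: v w => [|y v IHv] w; first by rewrite shuffless0 inE cats0 => /eqP ->.
rewrite shuffles_cons mem_cat => /orP [] /mapP [w' w'_in ->].
  by rewrite /= perm_cons IHu.
by rewrite perm_sym -(cat1s y v) perm_catCA /= perm_cons perm_sym IHv.
Qed.

Lemma shuffles_subseq {u v w} : w \in shuffles u v -> subseq u w && subseq v w.
Proof.
elim: u v w => [|x u IHu] v w.
  by rewrite inE => /eqP ->; rewrite sub0seq subseq_refl.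
elim: v w => [|y v IHv] w.
  by rewrite shuffless0 inE => /eqP ->; rewrite sub0seq subseq_refl.
rewrite shuffles_cons mem_cat => /orP [] /mapP [w' w'_in ->].
  case/andP: (IHu _ _ w'_in) => sub_u sub_v.
  by rewrite -(cat1s x u) -cat1s subseq_cat2l sub_u (subseq_trans sub_v) ?subseq_cons.
case/andP: (IHv _ w'_in) => sub_u sub_v.
by rewrite -(cat1s y v) -cat1s subseq_cat2l sub_v (subseq_trans sub_u) ?subseq_cons.
Qed.

Lemma uniq_shuffles u v : uniq (u ++ v) -> uniq (shuffles u v).
Proof.
elim: u v => [|x u IHu] v //; elim: v => [|y v IHv]; first by rewrite shuffless0.
move=> uniq_xuyv; have /andP [xNuyv uniq_uyv] := uniq_xuyv.
have xNy : x != y by apply: contraNneq xNuyv => ->; rewrite mem_cat mem_head orbT.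
rewrite shuffles_cons cat_uniq !map_inj_uniq; try by move=> ? ? [].
apply/and3P; split; first exact: IHu.
- apply/hasPn => _ /mapP [w _ ->]; apply/mapP => [[w' _ [yx _]]].
  by rewrite yx eqxx in xNy.
- apply: IHv; apply: subseq_uniq uniq_xuyv.
  by rewrite (cat_subseq (subseq_refl (x :: u))) ?subseq_cons.
Qed.

Lemma subseq_perm_eq {v w} : subseq v w -> perm_eq w v -> w = v.
Proof.
move=> sub_vw /perm_size size_wv.
by have [_] := size_subseq_leqif sub_vw; rewrite size_wv eqxx => /esym/eqP.
Qed.

Lemma subseq_consE x s z w :
  subseq (x :: s) (z :: w) = subseq (if x == z then s else x :: s) w.
Proof. by []. Qed.

Lemma shuffles_complete u v w : uniq (u ++ v) ->
  subseq u w -> subseq v w -> perm_eq w (u ++ v) -> w \in shuffles u v.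
Proof.
elim: w u v => [|z w IHw] u v uniq_uv sub_u sub_v perm_w.
  move: (perm_size perm_w); rewrite size_cat.
  by case: u {sub_u perm_w uniq_uv}; case: v {sub_v}.
case: u uniq_uv sub_u perm_w => [|x u] uniq_uv sub_u perm_w.
  by rewrite (subseq_perm_eq sub_v perm_w) mem_head.
case: v uniq_uv sub_v perm_w => [|y v] uniq_uv sub_v perm_w.
  by rewrite cats0 in perm_w; rewrite (subseq_perm_eq sub_u perm_w) shuffless0 mem_head.
have /andP [zNw uniq_w] : uniq (z :: w) by rewrite (perm_uniq perm_w).
have /andP [xNuyv uniq_uyv] := uniq_uv.
have cons_inj (a : T) : injective (cons a) by move=> ? ? [].
rewrite shuffles_cons mem_cat !subseq_consE in sub_u sub_v *.
have [zx|xNz] := eqVneq x z.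
  have yNx : y != x by apply: contraNneq xNuyv => ->; rewrite mem_cat mem_head orbT.
  subst z; rewrite eqxx (negbTE yNx) perm_cons in sub_u sub_v perm_w.
  by rewrite mem_map // IHw.
have [zy|yNz] := eqVneq y z.
  subst z; rewrite eqxx (negbTE xNz) in sub_u sub_v.
  rewrite mem_map // IHw ?orbT //.
  - by apply: subseq_uniq uniq_uv; rewrite (cat_subseq (subseq_refl (x :: u))) ?subseq_cons.
  - by rewrite -(perm_cons y) (perm_trans perm_w) // (perm_catCA (x :: u) [:: y] v).
rewrite (negbTE xNz) (negbTE yNz) in sub_u sub_v.
have : z \in x :: u ++ y :: v by rewrite -(perm_mem perm_w) mem_head.
rewrite inE mem_cat inE eq_sym (negbTE xNz) eq_sym (negbTE yNz) /=.
case/orP => z_in; rewrite (mem_subseq _ z_in) in zNw => //.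
- exact: subseq_trans (subseq_cons _ _) sub_u.
- exact: subseq_trans (subseq_cons _ _) sub_v.
Qed.

Lemma mem_shuffles u v w : uniq (u ++ v) ->
  (w \in shuffles u v) = [&& subseq u w, subseq v w & perm_eq w (u ++ v)].
Proof.
move=> uniq_uv; apply/idP/and3P => [w_in | [sub_u sub_v perm_w]].
  by have /andP [-> ->] := shuffles_subseq w_in; rewrite shuffles_perm.
exact: shuffles_complete.
Qed.

End Shuffles.

Lemma last_rev_cons {T : Type} (x0 : T) {x s s'} : rev s = x :: s' -> last x0 s = x.
Proof. by move=> rev_s; rewrite -(revK s) rev_s rev_cons last_rcons. Qed.

Lemma prec_swap {a b} : a != b -> prec b a = ~~ prec a b.
Proof. by rewrite /prec; repeat case: ifP; lia. Qed.

Lemma prec_trans {a b c} : prec a b -> prec b c -> prec a c.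
Proof. by rewrite /prec; repeat case: ifP; lia. Qed.

Lemma maj_prec_rcons s x :
  maj_prec (rcons s x) = (maj_prec s + prec x (last (0 : int) s) * size s)%N.
Proof.
case: s => [|z s]; first by rewrite /maj_prec /= !big_ord0 muln0.
rewrite /maj_prec size_rcons /= big_mkcond big_ord_recr /= [in RHS]big_mkcond /=.
congr addn.
  apply: eq_bigr => i _ /=; have lt_is := ltn_ord i.
  by rewrite nth_rcons lt_is -rcons_cons nth_rcons /= ltnS (ltnW lt_is).
rewrite nth_rcons ltnn eqxx -rcons_cons nth_rcons /= ltnSn.
by rewrite (nth_last (0 : int) (z :: s)); case: ifP; rewrite ?mul1n ?mul0n.
Qed.

Definition maj_rev (w : seq int) : nat := maj_prec (rev w).

Lemma maj_rev1 x : maj_rev [:: x] = 0%N.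
Proof. by rewrite /maj_rev /maj_prec big_ord0. Qed.

Lemma maj_rev_cons2 x y w :
  maj_rev (x :: y :: w) = (maj_rev (y :: w) + prec x y * (size w).+1)%N.
Proof. by rewrite /maj_rev rev_cons maj_prec_rcons size_rev /= rev_cons last_rcons. Qed.

Section ShuffleSum.

Variable t : {poly rat}.
Hypothesis t_at1 : t.[1] = 1.

(* x :: w runs over the shuffles of x :: u and y :: v beginning with x, and is
   weighted by t^maj of its reversal. *)
Definition shuffle_sum (x : int) u y v : {poly rat} :=
  \sum_(w <- shuffles u (y :: v)) t ^+ maj_rev (x :: w).

Lemma shuffle_sum0 x y v :
  shuffle_sum x [::] y v = t ^+ (maj_rev (y :: v) + prec x y * (size v).+1).
Proof. by rewrite /shuffle_sum big_seq1 maj_rev_cons2. Qed.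

Lemma shuffle_sum_cons x x' u y v :
  shuffle_sum x (x' :: u) y v =
  t ^+ (prec x x' * (size u + size v).+2) * shuffle_sum x' u y v +
  t ^+ (prec x y * (size u + size v).+2) * shuffle_sum y v x' u.
Proof.
have size_w w u' v' : w \in shuffles u' v' -> size w = (size u' + size v')%N.
  by move/shuffles_perm/perm_size; rewrite size_cat.
rewrite /shuffle_sum shuffles_cons big_cat !big_map !mulr_sumr.
rewrite -(perm_big _ (perm_shuffles (x' :: u) v)).
congr (_ + _); apply: eq_big_seq => w /size_w size_ww;
  by rewrite maj_rev_cons2 exprD mulrC size_ww /= ?addnS.
Qed.

Lemma shuffle_sum_closed x u y v : uniq (x :: u ++ y :: v) ->
  shuffle_sum x u y v =
  t ^+ (maj_rev (x :: u) + maj_rev (y :: v) + prec x y * (size v).+1)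
  * gauss_binom t (size u + size v).+1 (size v).+1.
Proof.
have [k] := ubnP (size u + size v); elim: k x u y v => // k IHk x [|x' u] y v.
  by rewrite shuffle_sum0 maj_rev1 gauss_binom_diag mulr1.
rewrite ltnS /= => size_lt uniq_xx'uyv.
have /andP [xNx'uyv uniq_x'uyv] := uniq_xx'uyv.
have uniq_yvx'u : uniq (y :: v ++ x' :: u) by rewrite -cat_cons uniq_catC.
have xNx' : x != x' by apply: contraNneq xNx'uyv => ->; rewrite mem_head.
have xNy : x != y by apply: contraNneq xNx'uyv => ->; rewrite inE mem_cat mem_head !orbT.
have x'Ny : x' != y.
  by case/andP: uniq_x'uyv => + _; apply: contraNneq => ->; rewrite mem_cat mem_head orbT.
have trans_xx'y : prec x x' && prec x' y ==> prec x y.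
  by apply/implyP => /andP [xx' x'y]; apply: prec_trans xx' x'y.
have cotrans_xx'y : prec x y ==> prec x x' || prec x' y.
  apply/implyP => xy; apply/contraT; rewrite negb_or -!prec_swap // => /andP [x'x yx'].
  by move: (prec_trans yx' x'x); rewrite prec_swap // xy.
have size_lt' : (size v + size u < k)%N by rewrite addnC.
rewrite shuffle_sum_cons !IHk //.
rewrite maj_rev_cons2 (prec_swap x'Ny) (gauss_binom_symS _ t_at1 (size v)).
rewrite [(size v + size u)%N]addnC.
transitivity (t ^+ (maj_rev (x' :: u) + maj_rev (y :: v)) *
  (t ^+ (prec x x' * (size u).+1 + prec x y * (size v).+1)
   * gauss_binom t (size u + size v).+2 (size v).+1)); last by rewrite !exprD; ring.
rewrite -(gauss_binom_pascal_step _ t_at1 (size u) (size v) trans_xx'y cotrans_xx'y).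
rewrite !exprD; ring.
Qed.

End ShuffleSum.

Lemma is_shuffle_rev s p a :
  is_shuffle (rev s) (rev p) (rev a) = is_shuffle s p a.
Proof.
rewrite /is_shuffle !subseq_rev -rev_cat perm_rev perm_sym perm_rev perm_sym.
by rewrite perm_sym perm_catC perm_sym.
Qed.

Lemma big_shuffles_last (F : seq int -> {poly rat}) {sigma pi x u y v} :
  uniq (sigma ++ pi) -> rev sigma = x :: u -> rev pi = y :: v ->
  \sum_(alpha <- permutations (sigma ++ pi)
          | is_shuffle sigma pi alpha && (last 0 alpha == last 0 sigma)) F alpha
  = \sum_(w <- shuffles u (y :: v)) F (rev (x :: w)).
Proof.
move=> uniq_sp rev_sigma rev_pi.
have uniq_rev : uniq (rev sigma ++ rev pi).
  by rewrite -rev_cat rev_uniq uniq_catC.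
have last_sigma : last 0 sigma = x := last_rev_cons 0 rev_sigma.
pose L := [seq rev w | w <- shuffles (rev sigma) (rev pi)].
have mem_L a : (a \in L) = is_shuffle sigma pi a.
  by rewrite -{1}(revK a) (mem_map (can_inj revK)) mem_shuffles // -is_shuffle_rev.
have perm_L : perm_eq
    [seq a <- permutations (sigma ++ pi) | is_shuffle sigma pi a && (last 0 a == last 0 sigma)]
    [seq a <- L | last 0 a == last 0 sigma].
  apply: uniq_perm; rewrite ?filter_uniq ?permutations_uniq ?map_inj_uniq ?uniq_shuffles //;
    first exact: (can_inj revK).
  move=> a; rewrite !mem_filter mem_permutations mem_L.
  case sh_a: (is_shuffle sigma pi a); rewrite /= ?andbF //.
  by case/and3P: sh_a => _ _ ->.
rewrite -big_filter (perm_big _ perm_L) big_filter big_map rev_sigma rev_pi shuffles_cons.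
rewrite big_cat !big_map /= [X in _ + X]big1 ?addr0 => [|w].
  by apply: eq_bigl => w; rewrite rev_cons last_rcons last_sigma eqxx.
rewrite rev_cons last_rcons last_sigma => /eqP y_x.
by move: uniq_rev; rewrite rev_sigma rev_pi y_x /= mem_cat mem_head orbT.
Qed.

Lemma neg_perm {s1 s2} : perm_eq s1 s2 -> neg s1 = neg s2.
Proof. by move/permP => perm12; rewrite /neg perm12. Qed.

Lemma big_shuffles_last_fmaj {sigma pi x u y v} :
  uniq (sigma ++ pi) -> rev sigma = x :: u -> rev pi = y :: v ->
  \sum_(alpha <- permutations (sigma ++ pi)
          | is_shuffle sigma pi alpha && (last 0 alpha == last 0 sigma)) 'X^(fmaj alpha)
  = 'X^(neg sigma + neg pi) * shuffle_sum 'X^2 x u y v.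
Proof.
move=> uniq_sp rev_sigma rev_pi; rewrite (big_shuffles_last _ uniq_sp rev_sigma rev_pi).
rewrite /shuffle_sum mulr_sumr; apply: eq_big_seq => w /shuffles_perm perm_w.
have perm_xw : perm_eq (rev (x :: w)) (sigma ++ pi).
  have perm_rev_cat : perm_eq (sigma ++ pi) (rev sigma ++ rev pi).
    by apply: perm_cat; rewrite perm_sym perm_rev.
  rewrite perm_rev perm_sym (perm_trans perm_rev_cat) //.
  by rewrite rev_sigma rev_pi perm_sym perm_cons.
by rewrite /fmaj (neg_perm perm_xw) /neg count_cat exprD exprM mulrC.
Qed.

Theorem lemma5p7 (A B : seq nat) (m n : nat) (sigma pi : seq int) :
  uniq A -> uniq B -> all (fun a => 0 < a)%N A -> all (fun b => 0 < b)%N B ->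
  ~~ has (fun a => a \in B) A ->
  size A = m -> (1 <= m)%N -> size B = n -> (1 <= n)%N ->
  signed_perm A sigma -> signed_perm B pi ->
  prec (last (0:int) sigma) (last (0:int) pi) ->
  \sum_(alpha <- permutations (sigma ++ pi)
          | is_shuffle sigma pi alpha && (last (0:int) alpha == last (0:int) sigma))
      'X^(fmaj alpha)
  = 'X^(fmaj sigma + fmaj pi + 2 * n) * qbinom (n + m - 1) n ('X ^+ 2).
Proof.
move=> uniq_A uniq_B _ _ disj_AB <- m_gt0 <- n_gt0 [_ perm_A] [_ perm_B] prec_last.
have uniq_sp : uniq (sigma ++ pi).
  apply: (@map_uniq _ _ absz); rewrite map_cat (perm_uniq (perm_cat perm_A perm_B)).
  by rewrite cat_uniq uniq_A uniq_B has_sym disj_AB.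
have size_sigma : size (rev sigma) = size A by rewrite size_rev -(perm_size perm_A) size_map.
have size_pi : size (rev pi) = size B by rewrite size_rev -(perm_size perm_B) size_map.
case rev_sigma: (rev sigma) size_sigma => [|x u] size_u; first by rewrite -size_u in m_gt0.
case rev_pi: (rev pi) size_pi => [|y v] size_v; first by rewrite -size_v in n_gt0.
rewrite (last_rev_cons 0 rev_sigma) (last_rev_cons 0 rev_pi) in prec_last.
have X2_at1 : ('X^2 : {poly rat}).[1] = 1 by rewrite hornerXn expr1n.
have uniq_xuyv : uniq (x :: u ++ y :: v).
  by rewrite -cat_cons -rev_sigma -rev_pi -rev_cat rev_uniq uniq_catC.
rewrite (big_shuffles_last_fmaj uniq_sp rev_sigma rev_pi) shuffle_sum_closed // prec_last.
rewrite -size_u -size_v /= qbinom_gauss //; last by lia.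
have -> : ((size v).+1 + (size u).+1 - 1 = (size u + size v).+1)%N by lia.
rewrite /fmaj /maj_rev -rev_sigma -rev_pi !revK mulrA -exprM -exprD.
by congr (_ * _); congr (_ ^+ _); lia.
Qed.
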